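(* Let $\mathfrak n=W\oplus\mathfrak z$ be a finite-dimensional 2-step nilpotent Lie algebra over a field of characteristic zero which is of TST type and satisfies $(\Lambda^2\mathfrak n)^{\mathfrak n}=\Lambda^2\mathfrak z$. Then every Lie bialgebra structure $\delta$ on $\mathfrak n$ is of the following form: there are $\delta_{\mathfrak z}$, $D^1,\dots,D^m$, $\varphi$ satisfying conditions (a), (b), (c) below such that $\delta(z)=\delta_{\mathfrak z}(z)$ for $z\in\mathfrak z$ and $\delta(v)=\sum_iD^i(v)\wedge z_i+\varphi(v)$ for $v\in W$. (a) $\delta_{\mathfrak z}:\mathfrak z\to\Lambda^2\mathfrak z$ satisfies co-Jacobi; write $\delta_{\mathfrak z}(z_i)=\sum_{a<b}c_i^{ab}z_a\wedge z_b$. (b) $D^i:W\to W$ are linear with $[D^a,D^b]=\sum_ic_i^{ab}D^i$ for $a<b$, and for all $x,y\in W$: $\sum_iT_i(x)(y)\delta_{\mathfrak z}(z_i)=\sum_{i,j}(T_i(D^jx)(y)+T_i(x)(D^jy))z_i\wedge z_j$. (c) $\varphi:W\to\Lambda^2\mathfrak z$, $\varphi(v)=\sum_{a<b}\varphi_{ab}(v)z_a\wedge z_b$, is linear with $\sum_i\varphi(D^iv)\wedge z_i+\sum_{a<b}\varphi_{ab}(v)(\delta_{\mathfrak z}(z_a)\wedge z_b-z_a\wedge\delta_{\mathfrak z}(z_b))=0$ for all $v\in W$.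
   Context: $\mathfrak z$ is the center with basis $z_1,\dots,z_m$, $W$ a linear complement, $T_i:W\to W^*$ defined by $[v,w]=\sum_iT_i(v)(w)z_i$. $\mathfrak n$ is of TST type if the only linear $S:W^*\to W$ with $T_iST_k+T_kST_i=0$ for all $i,k$ is $S=0$. $(\Lambda^2\mathfrak n)^{\mathfrak n}$ is the space of invariants for $\mathrm{ad}_x(a\wedge b)=[x,a]\wedge b+a\wedge[x,b]$. Lie bialgebra structure: linear $\delta:\mathfrak n\to\Lambda^2\mathfrak n$ with co-Jacobi ($\delta(x_1)\wedge x_2-x_1\wedge\delta(x_2)=0$, Sweedler $\delta(x)=x_1\wedge x_2$) and $\delta[x,y]=[\delta x,y]+[x,\delta y]$. *)

From HB Require Import structures.
From mathcomp Require Import all_boot all_order all_algebra.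
Set Implicit Arguments. Unset Strict Implicit. Unset Printing Implicit Defensive.
Import GRing.Theory.
Local Open Scope ring_scope.

Section Defs.
Variable K : fieldType.

Definition ev k (s : 'I_k) : 'rV[K]_k := delta_mx 0 s.

(* Lambda^2 V is modelled by skew-symmetric k x k matrices, with
   a /\ b := a (x) b - b (x) a. *)
Definition wedge k (a b : 'rV[K]_k) : 'M[K]_k := a^T *m b - b^T *m a.
Definition is_alt2 k (A : 'M[K]_k) : Prop := A^T = - A.

(* Lambda^3 V is modelled by alternating 3-tensors (functions I_k^3 -> K);
   (A /\ x)_{pqr} for A in Lambda^2 V and x in V (= x /\ A). *)
Definition wedge21 k (A : 'M[K]_k) (x : 'rV[K]_k) (p q r : 'I_k) : K :=
  A p q * x 0 r + A q r * x 0 p + A r p * x 0 q.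

(* co-Jacobi: delta(x_1) /\ x_2 - x_1 /\ delta(x_2) = 0 where
   delta(x) = x_1 /\ x_2 (Sweedler); written in coordinates: for
   A = delta x = sum_{s,t} A_st e_s (x) e_t, the expression
   delta(x_1)/\x_2 - x_1/\delta(x_2) equals sum_{s,t} A_st delta(e_s) /\ e_t. *)
Definition coJacobi k (d : 'rV[K]_k -> 'M[K]_k) : Prop :=
  forall x p q r,
    \sum_(s < k) \sum_(t < k) d x s t * wedge21 (d (ev s)) (ev t) p q r = 0.

Definition is_lie_bracket k (br : 'rV[K]_k -> 'rV[K]_k -> 'rV[K]_k) : Prop :=
  [/\ forall a x y w, br (a *: x + y) w = a *: br x w + br y w,
      forall a x y w, br w (a *: x + y) = a *: br w x + br w y,
      forall x, br x x = 0 &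
      forall x y w, br x (br y w) + br y (br w x) + br w (br x y) = 0].

Definition two_step k (br : 'rV[K]_k -> 'rV[K]_k -> 'rV[K]_k) : Prop :=
  (forall x y w, br (br x y) w = 0) /\ exists x y, br x y <> 0.

(* ad_x on Lambda^2: ad_x(a /\ b) = [x,a] /\ b + a /\ [x,b], extended linearly *)
Definition adL k (br : 'rV[K]_k -> 'rV[K]_k -> 'rV[K]_k) (x : 'rV[K]_k)
  (A : 'M[K]_k) : 'M[K]_k :=
  \sum_(p < k) \sum_(q < k) A p q *: wedge (br x (ev p)) (ev q).

(* Lie bialgebra structure (linearity of d is imposed by its type) *)
Definition lie_bialgebra k (br : 'rV[K]_k -> 'rV[K]_k -> 'rV[K]_k)
  (d : 'rV[K]_k -> 'M[K]_k) : Prop :=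
  [/\ forall x, is_alt2 (d x),
      coJacobi d &
      forall x y, d (br x y) = adL br x (d y) - adL br y (d x)].

(* n = K^(n+m): first n coordinates span W, last m span z, z_i = embZ (ev i) *)
Definition embW n m (v : 'rV[K]_n) : 'rV[K]_(n + m) := row_mx v 0.
Definition embZ n m (z : 'rV[K]_m) : 'rV[K]_(n + m) := row_mx 0 z.
Definition embZ2 n m (C : 'M[K]_m) : 'M[K]_(n + m) := block_mx 0 0 0 C.

Definition center_is_z n m (br : 'rV[K]_(n + m) -> 'rV[K]_(n + m) -> 'rV[K]_(n + m)) : Prop :=
  forall x, (forall y, br x y = 0) <-> exists z : 'rV[K]_m, x = embZ n z.

(* T_i(v)(w) = z_i-coefficient of [v,w] for v, w in W *)
Definition Tcoef n m (br : 'rV[K]_(n + m) -> 'rV[K]_(n + m) -> 'rV[K]_(n + m))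
  (i : 'I_m) (v w : 'rV[K]_n) : K :=
  br (embW m v) (embW m w) 0 (rshift n i).

(* matrix of T_i : W -> W^* (row-vector convention: v |-> v *m Tmx i,
   W^* identified with K^n via the dual basis) *)
Definition Tmx n m (br : 'rV[K]_(n + m) -> 'rV[K]_(n + m) -> 'rV[K]_(n + m))
  (i : 'I_m) : 'M[K]_n :=
  \matrix_(p < n, q < n) Tcoef br i (ev p) (ev q).

(* TST type: the only linear S : W^* -> W (matrix S, phi |-> phi *m S) with
   T_i S T_k + T_k S T_i = 0 for all i, k is S = 0 *)
Definition TST n m (br : 'rV[K]_(n + m) -> 'rV[K]_(n + m) -> 'rV[K]_(n + m)) : Prop :=
  forall S : 'M[K]_n,
    (forall i k : 'I_m,
        Tmx br k *m S *m Tmx br i + Tmx br i *m S *m Tmx br k = 0) ->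
    S = 0.

Definition invariants_are_L2z n m
  (br : 'rV[K]_(n + m) -> 'rV[K]_(n + m) -> 'rV[K]_(n + m)) : Prop :=
  forall A : 'M[K]_(n + m), is_alt2 A ->
    ((forall x, adL br x A = 0) <-> exists C : 'M[K]_m, is_alt2 C /\ A = embZ2 n C).

End Defs.
Arguments ev {K k} s.
Arguments embW {K n} m v.
Arguments embZ {K} n {m} z.
Arguments embZ2 {K} n {m} C.

From HB Require Import structures.
From mathcomp Require Import all_boot all_order all_algebra ring.
Import GRing.Theory.
Local Open Scope ring_scope.
Set Implicit Arguments. Unset Strict Implicit.

(* Split delta into blocks along n = W (+) z.  If z is central, the cocycle
   identity makes delta z ad-invariant, so delta z lies in Lambda^2 z; this is
   delta_z.  For v in W, the z-coordinates of the cocycle identity for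
   [v, w] in z say that the Lambda^2 W-block alpha of delta satisfies
   x T_i alpha(w) = w T_i alpha(x).  Hence the form (x T_k) alpha(u) (y T_i)^T
   changes sign under the cyclic shift (u, x, y) -> (x, y, u) with k, i swapped,
   so it is antisymmetric in (k, i): T_k alpha(u) T_i + T_i alpha(u) T_k = 0 and
   alpha = 0 by the TST property.  The W /\ z and Lambda^2 z blocks of delta v
   define the D^i and phi.  Condition (a) is the z/\z/\z-part of co-Jacobi at
   z, the commutator relation in (b) its W/\z/\z-part at elements of W, the second half of
   (b) the z/\z-part of the cocycle identity for [x, y], and (c) the
   z/\z/\z-part of co-Jacobi at v; characteristic 0 (in fact not 2) makes the
   alternating phi(v) vanish on the diagonal. *)

Section Coordinates.
Variable K : fieldType.

Lemma sum_mul_eqr k (F : 'I_k -> K) (j : 'I_k) : \sum_(i < k) F i * (i == j)%:R = F j.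
Proof.
rewrite (bigD1 j) //= eqxx mulr1 big1 ?addr0 // => i /negbTE ->; exact: mulr0.
Qed.

Lemma sum_mul_eql k (F : 'I_k -> K) (j : 'I_k) : \sum_(i < k) (i == j)%:R * F i = F j.
Proof. by rewrite -[RHS](sum_mul_eqr F); apply: eq_bigr => i _; rewrite mulrC. Qed.

Lemma evE k (s t : 'I_k) : (ev s : 'rV[K]_k) 0 t = (s == t)%:R.
Proof. by rewrite mxE eqxx eq_sym. Qed.

Lemma mx0E k l (i : 'I_k) (j : 'I_l) : (0 : 'M[K]_(k, l)) i j = 0.
Proof. by rewrite mxE. Qed.

Lemma mx_entry_ev k l (M : 'M[K]_(k, l)) i j : M i j = (ev i *m M *m (ev j)^T) 0 0.
Proof. by rewrite trmx_delta -rowE -colE !mxE. Qed.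

Lemma trmx11 (A : 'M[K]_1) : A^T = A.
Proof. by rewrite [A]mx11_scalar tr_scalar_mx. Qed.

Lemma linear_row_expansion k (V : lmodType K) (f : 'rV[K]_k -> V) :
  linear f -> forall v, f v = \sum_(s < k) v 0 s *: f (ev s).
Proof.
move=> hf v; have f0 : f 0 = 0 by have := hf (-1) 0 0; rewrite scaler0 addr0 scaleN1r addNr.
have fD x y : f (x + y) = f x + f y by have := hf 1 x y; rewrite !scale1r.
rewrite {1}(row_sum_delta v) (big_morph f fD f0); apply: eq_bigr => s _.
by rewrite -[_ *: 'e_s]addr0 hf f0 addr0.
Qed.

Lemma wedgeE k (a b : 'rV[K]_k) p q : wedge a b p q = a 0 p * b 0 q - b 0 p * a 0 q.
Proof. by rewrite !mxE !big_ord1 !mxE. Qed.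

Lemma sum_wedge_evE k (c : 'I_k -> 'I_k -> K) a b :
  (\sum_(i < k) \sum_(j < k) c i j *: wedge (ev i) (ev j)) a b = c a b - c b a.
Proof.
have row_sumE i : (\sum_(j < k) c i j *: wedge (ev i) (ev j)) a b
    = c i b * (i == a)%:R - c i a * (i == b)%:R.
  rewrite summxE; under eq_bigr => j _ do rewrite mxE wedgeE !evE mulrBr.
  rewrite sumrB -(sum_mul_eqr (fun j => c i j * (i == a)%:R) b)
    -(sum_mul_eqr (fun j => c i j * (i == b)%:R) a).
  by congr (_ - _); apply: eq_bigr => j _; ring.
by rewrite summxE (eq_bigr _ (fun i _ => row_sumE i)) sumrB !sum_mul_eqr.
Qed.

Lemma sum_wedge21_ev k (F : 'I_k -> 'M[K]_k) p q r :
  \sum_(i < k) wedge21 (F i) (ev i) p q r = F r p q + F p q r + F q r p.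
Proof.
rewrite /wedge21; under eq_bigr => i _ do rewrite !evE.
by rewrite !big_split /= !sum_mul_eqr.
Qed.

Lemma coJacobi_sumE k (X : 'M[K]_k) (Y : 'I_k -> 'M[K]_k) p q r :
  \sum_(s < k) \sum_(t < k) X s t * wedge21 (Y s) (ev t) p q r =
  \sum_(s < k) (X s r * Y s p q + X s p * Y s q r + X s q * Y s r p).
Proof.
apply: eq_bigr => s _; rewrite /wedge21.
under eq_bigr => t _ do rewrite !evE !mulrDr.
have sumE c j : \sum_(t < k) X s t * (c * (t == j)%:R) = X s j * c.
  by rewrite -(sum_mul_eqr (fun t => X s t * c)); apply: eq_bigr => t _; ring.
by rewrite !big_split /= !sumE.
Qed.

Lemma sum_lt_skew k (A : 'M[K]_k) (g : 'I_k -> 'I_k -> K) :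
  (forall a b, A b a = - A a b) -> (forall a, A a a = 0) ->
  \sum_(a < k) \sum_(b < k | (a < b)%N) A a b * (g a b - g b a)
  = \sum_(a < k) \sum_(b < k) A a b * g a b.
Proof.
move=> Askew Adiag.
have lower : \sum_(a < k) \sum_(b < k | (a < b)%N) A a b * g b a
           = - \sum_(a < k) \sum_(b < k | ~~ (a < b)%N) A a b * g a b.
  rewrite -sumrN; under eq_bigr => a _ do rewrite big_mkcond /=.
  under [RHS]eq_bigr => a _ do rewrite -sumrN big_mkcond /=.
  rewrite [RHS]exchange_big; apply: eq_bigr => a _; apply: eq_bigr => b _.
  case: (ltngtP a b) => [ab|//|/val_inj ->] /=.
    by rewrite (Askew a b) mulNr opprK.
  by rewrite Adiag mul0r oppr0.
under eq_bigr => a _ do rewrite (eq_bigr _ (fun b _ => mulrBr _ _ _)) sumrB.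
rewrite sumrB lower opprK -big_split /=.
by apply: eq_bigr => a _; rewrite [RHS](bigID (fun b : 'I_k => (a < b)%N)).
Qed.

Lemma adLE k (br : 'rV[K]_k -> 'rV[K]_k -> 'rV[K]_k) x A p q :
  adL br x A p q = \sum_(s < k) (A s q * br x (ev s) 0 p - A s p * br x (ev s) 0 q).
Proof.
rewrite /adL summxE; apply: eq_bigr => s _; rewrite summxE.
under eq_bigr => t _ do rewrite mxE wedgeE !evE mulrBr.
rewrite sumrB; congr (_ - _).
  rewrite -(sum_mul_eqr (fun t => A s t * br x (ev s) 0 p)).
  by apply: eq_bigr => t _; rewrite mulrA.
rewrite -(sum_mul_eqr (fun t => A s t * br x (ev s) 0 q)).
by apply: eq_bigr => t _; rewrite [_ * br _ _ _ _]mulrC mulrA.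
Qed.

End Coordinates.

Fact embW_is_linear (K : fieldType) n m : linear (@embW K n m).
Proof. by move=> a x y; rewrite /embW scale_row_mx add_row_mx scaler0 addr0. Qed.

HB.instance Definition _ (K : fieldType) n m :=
  GRing.isLinear.Build K _ _ _ (@embW K n m) (@embW_is_linear K n m).

Fact embZ_is_linear (K : fieldType) n m : linear (@embZ K n m).
Proof. by move=> a x y; rewrite /embZ scale_row_mx add_row_mx scaler0 addr0. Qed.

HB.instance Definition _ (K : fieldType) n m :=
  GRing.isLinear.Build K _ _ _ (@embZ K n m) (@embZ_is_linear K n m).

Lemma ev_lshift (K : fieldType) n m (p : 'I_n) :
  ev (lshift m p) = embW m (ev p) :> 'rV[K]_(n + m).
Proof.
apply/matrixP => i j; rewrite ord1 evE.
by case: (split_ordP j) => q ->; rewrite ?row_mxEl ?row_mxEr ?evE ?mxE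
  ?eq_lshift ?eq_lrshift.
Qed.

Lemma ev_rshift (K : fieldType) n m (p : 'I_m) :
  ev (rshift n p) = embZ n (ev p) :> 'rV[K]_(n + m).
Proof.
apply/matrixP => i j; rewrite ord1 evE.
by case: (split_ordP j) => q ->; rewrite ?row_mxEl ?row_mxEr ?evE ?mxE
  ?eq_rlshift ?eq_rshift.
Qed.

Section LieBracket.
Variables (K : fieldType) (k : nat) (br : 'rV[K]_k -> 'rV[K]_k -> 'rV[K]_k).
Hypothesis hlie : is_lie_bracket br.

Lemma br_linearl w : linear (br^~ w).
Proof. by case: hlie => hl _ _ _ a x y; exact: hl. Qed.

Lemma br_linearr w : linear (br w).
Proof. by case: hlie => _ hr _ _ a x y; exact: hr. Qed.

Lemma br_anti x y : br x y = - br y x.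
Proof.
case: hlie => hl hr hxx _.
have brDl u v w : br (u + v) w = br u w + br v w by have := hl 1 u v w; rewrite !scale1r.
have brDr u v w : br w (u + v) = br w u + br w v by have := hr 1 u v w; rewrite !scale1r.
have := hxx (x + y); rewrite brDl !brDr !hxx add0r addr0.
by move=> /eqP; rewrite addr_eq0 => /eqP.
Qed.

End LieBracket.

Section Components.
Variables (K : fieldType) (n m : nat) (d : {linear 'rV[K]_(n + m) -> 'M[K]_(n + m)}).

Definition delta_z (z : 'rV[K]_m) : 'M[K]_m := drsubmx (d (embZ n z)).
Definition delta_phi (v : 'rV[K]_n) : 'M[K]_m := drsubmx (d (embW m v)).
Definition delta_WW (v : 'rV[K]_n) : 'M[K]_n := ulsubmx (d (embW m v)).
Definition delta_D (i : 'I_m) : 'M[K]_n :=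
  \matrix_(s, p) d (embW m (ev s)) (lshift m p) (rshift n i).

Fact delta_z_is_linear : linear delta_z.
Proof. by move=> a x y; apply/matrixP => i j; rewrite /delta_z !linearP !mxE. Qed.

Fact delta_phi_is_linear : linear delta_phi.
Proof. by move=> a x y; apply/matrixP => i j; rewrite /delta_phi !linearP !mxE. Qed.

End Components.

HB.instance Definition _ (K : fieldType) n m d :=
  GRing.isLinear.Build K _ _ _ (@delta_z K n m d) (@delta_z_is_linear K n m d).
HB.instance Definition _ (K : fieldType) n m d :=
  GRing.isLinear.Build K _ _ _ (@delta_phi K n m d) (@delta_phi_is_linear K n m d).

Section TwoStepBialgebra.
Variables (K : fieldType) (n m : nat).
Variable br : 'rV[K]_(n + m) -> 'rV[K]_(n + m) -> 'rV[K]_(n + m).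
Hypotheses (hchar : [pchar K] =i pred0) (hlie : is_lie_bracket br) (h2 : two_step br).
Hypotheses (hz : center_is_z br) (hTST : TST br) (hinv : invariants_are_L2z br).
Variable d : {linear 'rV[K]_(n + m) -> 'M[K]_(n + m)}.
Hypothesis hd : lie_bialgebra br d.

Lemma br_central x y : exists z, br x y = embZ n z.
Proof. by apply/hz => w; case: h2 => h _; exact: h. Qed.

Lemma br_lshift x y p : br x y 0 (lshift m p) = 0.
Proof. by case: (br_central x y) => z ->; rewrite row_mxEl mxE. Qed.

Lemma br_embZl z y : br (embZ n z) y = 0.
Proof. by move: y; apply/hz; exists z. Qed.

Lemma br_embZr z y : br y (embZ n z) = 0.
Proof. by rewrite (br_anti hlie) br_embZl oppr0. Qed.

Lemma Tcoef_anti i v w : Tcoef br i v w = - Tcoef br i w v.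
Proof. by rewrite /Tcoef (br_anti hlie) mxE. Qed.

Lemma Tcoef_expandr i v w : Tcoef br i v w = \sum_(p < n) w 0 p * Tcoef br i v (ev p).
Proof.
have lin : linear (fun w => br (embW m v) (embW m w)).
  by move=> a x y; rewrite linearP (br_linearr hlie).
by rewrite /Tcoef (linear_row_expansion lin) summxE; apply: eq_bigr => p _; rewrite mxE.
Qed.

Lemma mulmx_TmxE i v q : (v *m Tmx br i) 0 q = Tcoef br i v (ev q).
Proof.
have lin : linear (fun v => br (embW m v) (embW m (ev q))).
  by move=> a x y; rewrite linearP (br_linearl hlie).
rewrite /Tcoef (linear_row_expansion lin) !mxE summxE.
by apply: eq_bigr => p _; rewrite !mxE.
Qed.

Lemma tr_Tmx i : (Tmx br i)^T = - Tmx br i.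
Proof. by apply/matrixP => p q; rewrite !mxE Tcoef_anti. Qed.

Lemma adL_embZ z A : adL br (embZ n z) A = 0.
Proof.
rewrite /adL big1 // => p _; rewrite big1 // => q _.
by rewrite br_embZl /wedge trmx0 mul0mx mulmx0 subr0 scaler0.
Qed.

Lemma adL_embWE v A P Q : adL br (embW m v) A P Q =
  \sum_(p < n) (A (lshift m p) Q * br (embW m v) (embW m (ev p)) 0 P
               - A (lshift m p) P * br (embW m v) (embW m (ev p)) 0 Q).
Proof.
rewrite adLE big_split_ord /= [X in _ + X]big1 ?addr0.
  by apply: eq_bigr => p _; rewrite ev_lshift.
by move=> j _; rewrite ev_rshift br_embZr !mxE !mulr0 subrr.
Qed.

Lemma d_anti x P Q : d x Q P = - d x P Q.
Proof. by case: hd => alt _ _; have /matrixP/(_ P Q) := alt x; rewrite !mxE. Qed.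

Lemma d_br x y : d (br x y) = adL br x (d y) - adL br y (d x).
Proof. by case: hd. Qed.

Lemma d_embZ z : d (embZ n z) = embZ2 n (delta_z d z).
Proof.
have inv x : adL br x (d (embZ n z)) = 0.
  by have := d_br x (embZ n z); rewrite br_embZr linear0 adL_embZ subr0.
have alt : is_alt2 (d (embZ n z)) by case: hd.
have [C [_ dE]] := proj1 (hinv alt) inv.
by rewrite /delta_z dE /embZ2 block_mxKdr.
Qed.

Lemma d_embZ_lr z p q : d (embZ n z) (lshift m p) (rshift n q) = 0.
Proof. by rewrite d_embZ block_mxEur mxE. Qed.

Lemma d_embZ_rl z p q : d (embZ n z) (rshift n p) (lshift m q) = 0.
Proof. by rewrite d_embZ block_mxEdl mxE. Qed.

Lemma d_embZ_rr z p q : d (embZ n z) (rshift n p) (rshift n q) = delta_z d z p q.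
Proof. by rewrite d_embZ block_mxEdr. Qed.

Lemma d_embW_expansion v P Q :
  d (embW m v) P Q = \sum_(s < n) v 0 s * d (embW m (ev s)) P Q.
Proof.
rewrite {1}(row_sum_delta v) !linear_sum summxE.
by apply: eq_bigr => s _; rewrite !linearZ mxE.
Qed.

Lemma mulmx_delta_DE v i p : (v *m delta_D d i) 0 p = d (embW m v) (lshift m p) (rshift n i).
Proof. by rewrite d_embW_expansion mxE; apply: eq_bigr => s _; rewrite mxE. Qed.

Lemma tr_delta_WW v : (delta_WW d v)^T = - delta_WW d v.
Proof. by apply/matrixP => p q; rewrite !mxE d_anti. Qed.

Lemma delta_WW_sym i v w :
  v *m Tmx br i *m delta_WW d w = w *m Tmx br i *m delta_WW d v.
Proof.
apply/rowP => q; rewrite [LHS]mxE [RHS]mxE.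
under eq_bigr => p _ do rewrite mulmx_TmxE !mxE.
under [RHS]eq_bigr => p _ do rewrite mulmx_TmxE !mxE.
have := d_br (embW m v) (embW m w).
have [z ->] := br_central (embW m v) (embW m w).
move/matrixP/(_ (lshift m q) (rshift n i)); rewrite d_embZ_lr !mxE !adL_embWE.
under [X in _ = _ - X]eq_bigr => p _ do rewrite br_lshift mulr0 sub0r.
under [X in _ = X - _]eq_bigr => p _ do rewrite br_lshift mulr0 sub0r.
rewrite !sumrN opprK => /eqP; rewrite eq_sym addrC subr_eq0 => /eqP sym.
rewrite /Tcoef (eq_bigr _ (fun p _ => mulrC _ _)) -sym.
by apply: eq_bigr => p _; rewrite mulrC.
Qed.

Definition tst_form u x y k i : 'M[K]_1 :=
  x *m Tmx br k *m delta_WW d u *m (y *m Tmx br i)^T.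

Lemma tst_form_rot u x y k i : tst_form u x y k i = - tst_form x y u i k.
Proof.
rewrite /tst_form delta_WW_sym -[LHS]trmx11 !trmx_mul !trmxK tr_delta_WW.
by rewrite mulNmx mulmxN !mulmxA.
Qed.

Lemma tst_form_anti u x y k i : tst_form u x y k i = - tst_form u x y i k.
Proof. by rewrite tst_form_rot (tst_form_rot x) (tst_form_rot y) opprK. Qed.

Lemma delta_WW_eq0 v : delta_WW d v = 0.
Proof.
have entryE j l x y :
    (Tmx br j *m delta_WW d v *m Tmx br l) x y = - tst_form v (ev x) (ev y) j l 0 0.
  rewrite [LHS]mx_entry_ev /tst_form trmx_mul tr_Tmx mulNmx mulmxN.
  by rewrite [in RHS]mxE opprK !mulmxA.
apply: hTST => i k; apply/matrixP => x y.
by rewrite [LHS]mxE !entryE tst_form_anti [X in - X + _]mxE opprK subrr mxE.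
Qed.

Lemma d_embW_ll v p q : d (embW m v) (lshift m p) (lshift m q) = 0.
Proof. by have /matrixP/(_ p q) := delta_WW_eq0 v; rewrite !mxE. Qed.

Lemma d_embW v : d (embW m v) =
  \sum_(i < m) wedge (embW m (v *m delta_D d i)) (embZ n (ev i)) + embZ2 n (delta_phi d v).
Proof.
apply/matrixP => P Q; rewrite mxE summxE.
under [X in _ = X + _]eq_bigr => i _ do rewrite wedgeE /embW /embZ.
case: (split_ordP P) => [p ->|a ->]; case: (split_ordP Q) => [q ->|b ->].
- rewrite d_embW_ll block_mxEul mx0E addr0 big1 // => i _.
  by rewrite !row_mxEl !mx0E mulr0 mul0r subrr.
- rewrite block_mxEur mx0E addr0 -mulmx_delta_DE.
  rewrite -[LHS](sum_mul_eqr (fun i => (v *m delta_D d i) 0 p) b).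
  by apply: eq_bigr => i _; rewrite !row_mxEl !row_mxEr evE mx0E mul0r subr0.
- rewrite block_mxEdl mx0E addr0 d_anti -mulmx_delta_DE.
  rewrite -(sum_mul_eql (fun i => (v *m delta_D d i) 0 q) a) -sumrN.
  by apply: eq_bigr => i _; rewrite !row_mxEl !row_mxEr evE mx0E mul0r sub0r.
- rewrite block_mxEdr big1 ?add0r; first by rewrite /delta_phi !mxE.
  by move=> i _; rewrite !row_mxEr !mx0E mul0r mulr0 subrr.
Qed.

Lemma d_coJacobi : coJacobi d.
Proof. by case: hd. Qed.

Lemma delta_z_alt z : is_alt2 (delta_z d z).
Proof. by apply/matrixP => a b; rewrite !mxE d_anti. Qed.

Lemma delta_z_coJacobi : coJacobi (delta_z d).
Proof.
move=> z p q r.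
have := d_coJacobi (embZ n z) (rshift n p) (rshift n q) (rshift n r).
rewrite (coJacobi_sumE _ (fun s => d (ev s))) (coJacobi_sumE _ (fun s => delta_z d (ev s))).
rewrite big_split_ord /= big1 ?add0r => [cj|s _]; last by rewrite !d_embZ_lr !mul0r !addr0.
by apply: etrans cj; apply: eq_bigr => j _; rewrite ev_rshift !d_embZ_rr.
Qed.

Lemma delta_D_commutator a b :
  delta_D d b *m delta_D d a - delta_D d a *m delta_D d b
  = \sum_(i < m) delta_z d (ev i) a b *: delta_D d i.
Proof.
apply/matrixP => s p.
have := d_coJacobi (embW m (ev s)) (lshift m p) (rshift n a) (rshift n b).
rewrite (coJacobi_sumE _ (fun s => d (ev s))) big_split_ord /=.
under eq_bigr => u _ do rewrite ev_lshift d_embW_ll mul0r addr0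
  (d_anti (embW m (ev u)) (lshift m p) (rshift n b)).
under [X in _ + X]eq_bigr => j _ do rewrite ev_rshift d_embZ_lr d_embZ_rl d_embZ_rr
  !mulr0 add0r addr0 (d_anti _ (lshift m p) (rshift n j)).
move/eqP; rewrite addr_eq0 -sumrN => /eqP cj.
rewrite !mxE summxE -sumrB; apply: etrans (etrans cj _).
  by apply: eq_bigr => u _; rewrite !mxE; ring.
by apply: eq_bigr => j _; rewrite !mxE; ring.
Qed.

Lemma delta_z_Tcoef x y :
  \sum_(i < m) Tcoef br i x y *: delta_z d (ev i)
  = \sum_(i < m) \sum_(j < m)
      (Tcoef br i (x *m delta_D d j) y + Tcoef br i x (y *m delta_D d j)) *: wedge (ev i) (ev j).
Proof.
have [z brE] := br_central (embW m x) (embW m y).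
have zE i : Tcoef br i x y = z 0 i by rewrite /Tcoef brE row_mxEr.
under eq_bigr => i _ do rewrite zE.
rewrite -(linear_row_expansion (delta_z_is_linear d)).
apply/matrixP => a b; rewrite sum_wedge_evE.
have := d_br (embW m x) (embW m y); rewrite brE => /matrixP/(_ (rshift n a) (rshift n b)).
rewrite d_embZ_rr => ->; rewrite !mxE !adL_embWE.
under eq_bigr => p _ do rewrite -!mulmx_delta_DE.
under [X in _ - X]eq_bigr => p _ do rewrite -!mulmx_delta_DE.
rewrite (Tcoef_anti a (x *m delta_D d b)) (Tcoef_anti b (x *m delta_D d a)).
rewrite (Tcoef_expandr a x (y *m delta_D d b)) (Tcoef_expandr b x (y *m delta_D d a)).
rewrite (Tcoef_expandr a y (x *m delta_D d b)) (Tcoef_expandr b y (x *m delta_D d a)).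
rewrite /Tcoef !sumrB; ring.
Qed.

Lemma d_diag x P : d x P P = 0.
Proof.
have two_neq0 : (2%:R : K) != 0 by move/pcharf0P: hchar => ->.
have /eqP : 2%:R * d x P P = 0 by rewrite mulr2n mulrDl mul1r {1}d_anti addNr.
by rewrite mulf_eq0 (negbTE two_neq0) => /eqP.
Qed.

Lemma delta_phi_alt v : is_alt2 (delta_phi d v).
Proof. by apply/matrixP => a b; rewrite !mxE d_anti. Qed.

Lemma delta_phi_coJacobi v p q r :
  \sum_(i < m) wedge21 (delta_phi d (v *m delta_D d i)) (ev i) p q r
  + \sum_(a < m) \sum_(b < m | (a < b)%N)
      delta_phi d v a b * (wedge21 (delta_z d (ev a)) (ev b) p q r
                           - wedge21 (delta_z d (ev b)) (ev a) p q r) = 0.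
Proof.
rewrite sum_wedge21_ev (@sum_lt_skew _ _ (delta_phi d v)); first last.
- by move=> a; rewrite !mxE d_diag.
- by move=> a b; rewrite !mxE d_anti.
rewrite (coJacobi_sumE _ (fun a => delta_z d (ev a))).
have := d_coJacobi (embW m v) (rshift n p) (rshift n q) (rshift n r).
rewrite (coJacobi_sumE _ (fun s => d (ev s))) big_split_ord /=.
under eq_bigr => u _ do rewrite ev_lshift -!mulmx_delta_DE.
rewrite !big_split /= -!d_embW_expansion => cj; apply: etrans cj.
by congr (_ + _ + _ + (_ + _ + _)); rewrite ?mxE //; apply: eq_bigr => i _;
  rewrite ev_rshift d_embZ_rr !mxE.
Qed.

End TwoStepBialgebra.

Unset Implicit Arguments.

Theorem mainTheorem7 (K : fieldType) (n m : nat)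
  (br : 'rV[K]_(n + m) -> 'rV[K]_(n + m) -> 'rV[K]_(n + m))
  (hchar : [pchar K] =i pred0)
  (hlie : is_lie_bracket br)
  (h2 : two_step br)
  (hz : center_is_z br)
  (hTST : TST br)
  (hinv : invariants_are_L2z br)
  (d : {linear 'rV[K]_(n + m) -> 'M[K]_(n + m)})
  (hd : lie_bialgebra br d) :
  exists (dz : {linear 'rV[K]_m -> 'M[K]_m}) (D : 'I_m -> 'M[K]_n)
         (phi : {linear 'rV[K]_n -> 'M[K]_m}),
    [/\ (* (a) *)
        (forall z : 'rV[K]_m, is_alt2 (dz z)) /\ coJacobi dz,
        (* (b) [D^a,D^b] = D^a o D^b - D^b o D^a, maps acting on row vectors *)
        (forall a b : 'I_m, (a < b)%N ->
            D b *m D a - D a *m D b = \sum_(i < m) dz (ev i) a b *: D i)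
        /\ (forall x y : 'rV[K]_n,
            \sum_(i < m) Tcoef br i x y *: dz (ev i)
            = \sum_(i < m) \sum_(j < m)
                (Tcoef br i (x *m D j) y + Tcoef br i x (y *m D j)) *:
                  wedge (ev i) (ev j)),
        (* (c) *)
        (forall v : 'rV[K]_n, is_alt2 (phi v)) /\
        (forall (v : 'rV[K]_n) (p q r : 'I_m),
            \sum_(i < m) wedge21 (phi (v *m D i)) (ev i) p q r
            + \sum_(a < m) \sum_(b < m | (a < b)%N)
                phi v a b * (wedge21 (dz (ev a)) (ev b) p q r
                             - wedge21 (dz (ev b)) (ev a) p q r) = 0),
        forall z : 'rV[K]_m, d (embZ n z) = embZ2 n (dz z) &
        forall v : 'rV[K]_n,
          d (embW m v) = \sum_(i < m) wedge (embW m (v *m D i)) (embZ n (ev i))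
                         + embZ2 n (phi v)].
Proof.
exists (delta_z d : {linear _ -> _}), (delta_D d), (delta_phi d : {linear _ -> _}).
split.
- exact (conj (delta_z_alt hd) (delta_z_coJacobi hlie hz hinv hd)).
- split=> [a b _|]; first exact (delta_D_commutator hlie h2 hz hTST hinv hd a b).
  exact (delta_z_Tcoef hlie h2 hz hinv hd).
- exact (conj (delta_phi_alt hd) (delta_phi_coJacobi hchar hlie hz hinv hd)).
- exact (d_embZ hlie hz hinv hd).
- exact (d_embW hlie h2 hz hTST hinv hd).
Qed.
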